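(* Let $A$ be a commutative ring and let $x_0,x_1,\ldots,x_n$ be a path in $\Gamma(A)$. Fix $X\in\mathrm{GL}_2(A)$ with $x_0=\infty\cdot X$. Then there exist unique $a_1,\ldots,a_n\in A$ satisfying $x_i=\infty\cdot E(a_i)E(a_{i-1})\cdots E(a_1)X$ for $i=1,\ldots,n$. Conversely, given $X\in\mathrm{GL}_2(A)$ and $a_1,\ldots,a_n\in A$, setting $x_0:=\infty\cdot X$ and $x_i:=\infty\cdot E(a_i)\cdots E(a_1)X$ for $1\le i\le n$, the sequence $x_0,x_1,\ldots,x_n$ is a path in $\Gamma(A)$.
   Context: A unimodular row over $A$ is $(a,b)\in A^2$ with $aA+bA=A$. $\Gamma(A)$ is the graph whose vertices are classes $[u]$ of unimodular rows modulo multiplication by units, with $\{[u],[v]\}$ an edge iff the matrix with rows $u,v$ lies in $\mathrm{GL}_2(A)$; a path is a sequence of vertices in which consecutive vertices are adjacent. $\mathrm{GL}_2(A)$ acts on vertices on the right by $[u]\cdot M=[uM]$; $\infty=[(1,0)]$. $E(a)=\begin{pmatrix}a&1\\-1&0\end{pmatrix}$. *)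

From HB Require Import structures.
From mathcomp Require Import all_boot all_order all_algebra.
Set Implicit Arguments. Unset Strict Implicit. Unset Printing Implicit Defensive.
Import GRing.Theory.
Local Open Scope ring_scope.

Section Gamma.
Variable A : comPzRingType.

Definition is_unitA (c : A) : Prop := exists d : A, c * d = 1.

Definition unimodular (u : 'rV[A]_2) : Prop :=
  exists c d : A, u 0 0 * c + u 0 1 * d = 1.

(* same vertex of Gamma(A): classes modulo multiplication by units *)
Definition same_vertex (u v : 'rV[A]_2) : Prop :=
  exists c : A, is_unitA c /\ v = c *: u.

Definition mx2 (u v : 'rV[A]_2) : 'M[A]_2 :=
  \matrix_(i < 2, j < 2) (if (i : nat) == 0%N then u 0 j else v 0 j).

Definition inGL2 (M : 'M[A]_2) : Prop :=
  exists N : 'M[A]_2, M *m N = 1%:M /\ N *m M = 1%:M.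

(* edge relation of Gamma(A) on representatives (well defined on classes) *)
Definition adjacent (u v : 'rV[A]_2) : Prop := inGL2 (mx2 u v).

(* x_0, ..., x_n (representatives) is a path in Gamma(A) *)
Definition is_path (n : nat) (x : nat -> 'rV[A]_2) : Prop :=
  (forall i, (i <= n)%N -> unimodular (x i)) /\
  (forall i, (i < n)%N -> adjacent (x i) (x i.+1)).

Definition infty : 'rV[A]_2 := \row_(j < 2) (if (j : nat) == 0%N then 1 else 0).

Definition Emx (a : A) : 'M[A]_2 :=
  \matrix_(i < 2, j < 2)
    (if (i : nat) == 0%N then (if (j : nat) == 0%N then a else 1)
     else (if (j : nat) == 0%N then -1 else 0)).

Fixpoint Eprod (a : nat -> A) (i : nat) : 'M[A]_2 :=
  match i with
  | 0 => 1%:M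
  | k.+1 => Emx (a k.+1) *m Eprod a k
  end.

End Gamma.

From mathcomp Require Import all_boot all_order all_algebra.
Set Implicit Arguments.
Unset Strict Implicit.
Unset Printing Implicit Defensive.
Import GRing.Theory.
Local Open Scope ring_scope.

(* A matrix lies in GL_2 exactly when its determinant is a unit. Suppose the
   vertex u is, up to a unit, the first row Y_0 of some Y in GL_2, and v is
   adjacent to u. Writing v = p Y_0 + q Y_1 in the basis of rows of Y, the
   determinant of the matrix with rows u, v is a unit multiple of q, so q is a
   unit and q^-1 v = (q^-1 p) Y_0 + Y_1 is the first row of E(q^-1 p) Y; as the
   rows of Y are linearly independent, this a = q^-1 p is determined by the
   class of v. Induction along the path gives existence and uniqueness of the
   a_i. Conversely, the first rows of P and of E(a) P are the rows of
   [[1, 0], [a, 1]] P, which is invertible. *)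

Section TwoByTwo.
Variable R : comPzRingType.
Implicit Types (M N : 'M[R]_2) (u v : 'rV[R]_2).

Lemma lift0_ord2 : lift 0 0 = 1 :> 'I_2.
Proof. exact: val_inj. Qed.

Lemma big_ord2 (F : 'I_2 -> R) : \sum_(i < 2) F i = F 0 + F 1.
Proof. by rewrite !big_ord_recl big_ord0 addr0 lift0_ord2. Qed.

Lemma row2P u v : u 0 0 = v 0 0 -> u 0 1 = v 0 1 -> u = v.
Proof.
move=> e0 e1; apply/rowP => -[[|[|j]] lt_j2] //.
  by rewrite (_ : Ordinal lt_j2 = 0) //; apply: val_inj.
by rewrite (_ : Ordinal lt_j2 = 1) //; apply: val_inj.
Qed.

Lemma det_mx22 M : \det M = M 0 0 * M 1 1 - M 0 1 * M 1 0.
Proof.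
have lift10 : lift 1 0 = 0 :> 'I_2 by apply: val_inj.
rewrite (expand_det_row _ 0) big_ord2 /cofactor !det_mx11 !mxE lift0_ord2 lift10.
by rewrite expr0 expr1 mul1r mulN1r mulrN.
Qed.

Lemma inGL2_det M : inGL2 M <-> is_unitA (\det M).
Proof.
split=> [[N [MN _]] | [k detMk]].
  by exists (\det N); rewrite -det_mulmx MN det1.
exists (k *: \adj M); rewrite -scalemxAr -scalemxAl mul_mx_adj mul_adj_mx.
by rewrite scale_scalar_mx mulrC detMk.
Qed.

Lemma inGL2_mul M N : inGL2 M -> inGL2 N -> inGL2 (M *m N).
Proof.
move=> /inGL2_det[k detMk] /inGL2_det[l detNl]; apply/inGL2_det.
by exists (k * l); rewrite det_mulmx mulrACA detMk detNl mulr1.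
Qed.

Lemma mulmx_inGL2_inj u v M : inGL2 M -> u *m M = v *m M -> u = v.
Proof.
case=> N [MN _] uMvM.
by rewrite -[u]mulmx1 -[v]mulmx1 -MN !mulmxA uMvM.
Qed.

Lemma mx2_mulmx u v M : mx2 u v *m M = mx2 (u *m M) (v *m M).
Proof.
by apply/matrixP => i j; rewrite !mxE; case: ifP => i0; apply: eq_bigr => k _; rewrite mxE i0.
Qed.

Lemma det_mx2 u v : \det (mx2 u v) = u 0 0 * v 0 1 - u 0 1 * v 0 0.
Proof. by rewrite det_mx22 !mxE. Qed.

Lemma inftyE M : infty R *m M = row 0 M.
Proof. by apply/rowP => j; rewrite !mxE big_ord2 !mxE /= mul1r mul0r addr0. Qed.

Lemma unimodular_row0 M : inGL2 M -> unimodular (row 0 M).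
Proof.
case=> N [MN _]; exists (N 0 0), (N 1 0).
by move/matrixP/(_ 0 0): MN; rewrite !mxE big_ord2.
Qed.

Lemma is_unitA_mulr (c d : R) : is_unitA (c * d) -> is_unitA d.
Proof. by case=> e cde; exists (c * e); rewrite mulrCA mulrA. Qed.

End TwoByTwo.

Section Gamma.
Variable A : comPzRingType.
Implicit Types (M X Y : 'M[A]_2) (u v : 'rV[A]_2) (a b : nat -> A).

Lemma det_Emx (c : A) : \det (Emx c) = 1.
Proof. by rewrite det_mx22 !mxE /= mulr0 sub0r mulrN1 opprK. Qed.

Lemma inGL2_Eprod a i X : inGL2 X -> inGL2 (Eprod a i *m X).
Proof.
move=> GLX; elim: i => [|i IH] /=; first by rewrite mul1mx.
by rewrite -mulmxA; apply: inGL2_mul IH; apply/inGL2_det; exists 1; rewrite det_Emx mulr1.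
Qed.

Lemma eq_Eprod a b i :
  (forall j, (0 < j <= i)%N -> a j = b j) -> Eprod a i = Eprod b i.
Proof.
elim: i => [//|i IH] eq_ab /=; rewrite eq_ab ?leqnn // IH // => j /andP[j_gt0 j_le_i].
by rewrite eq_ab // j_gt0 ltnW.
Qed.

Lemma adjacent_row0_Emx (c : A) M :
  inGL2 M -> adjacent (row 0 M) (row 0 (Emx c *m M)).
Proof.
move=> GLM; rewrite /adjacent -[M in row 0 M]mul1mx !row_mul -mx2_mulmx.
apply: inGL2_mul GLM; apply/inGL2_det; exists 1.
by rewrite det_mx2 !mxE /= mul1r mul0r subr0 mulr1.
Qed.

Lemma same_vertex_Emx_step Y u v :
  inGL2 Y -> same_vertex u (row 0 Y) -> adjacent u v ->
  exists c : A, same_vertex v (row 0 (Emx c *m Y)).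
Proof.
move=> [N [YN NY]] [c [[d cd] Yu]] uv.
have [w vE] : exists w, v = w *m Y by exists (v *m N); rewrite -mulmxA NY mulmx1.
have uNE : d *: row 0 1%:M = u *m N.
  by rewrite -YN row_mul Yu -scalemxAl scalerA mulrC cd scale1r.
have /inGL2_det : inGL2 (mx2 (u *m N) w).
  by rewrite -[w]mulmx1 -YN mulmxA -vE -mx2_mulmx; apply: inGL2_mul uv _; exists Y.
rewrite det_mx2 -uNE !mxE /= mulr1 mulr0 mul0r subr0 => /is_unitA_mulr[e w1e].
exists (e * w 0 0), e; split; first by exists (w 0 1); rewrite mulrC.
rewrite row_mul vE scalemxAl; congr (_ *m _).
by apply: row2P; rewrite !mxE //= mulrC.
Qed.

Lemma same_vertex_Emx_uniq Y v (c c' : A) :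
  inGL2 Y -> same_vertex v (row 0 (Emx c *m Y)) ->
  same_vertex v (row 0 (Emx c' *m Y)) -> c = c'.
Proof.
move=> GLY [s [[s' ss'] vc]] [t [_ vc']].
have : (t *: row 0 (Emx c)) *m Y = (s *: row 0 (Emx c')) *m Y.
  by rewrite -!scalemxAl -!row_mul vc vc' !scalerA mulrC.
move=> /(mulmx_inGL2_inj GLY)/rowP e; move: (e 1) (e 0); rewrite !mxE /= !mulr1 => -> sc.
by rewrite -[c]mul1r -[c']mul1r -ss' (mulrC s) -!mulrA sc.
Qed.

Lemma is_path_Eprod n X a :
  inGL2 X -> is_path n (fun i => infty A *m (Eprod a i *m X)).
Proof.
move=> GLX; split=> i _; rewrite !inftyE; first exact/unimodular_row0/inGL2_Eprod.
by rewrite /= -mulmxA; apply/adjacent_row0_Emx/inGL2_Eprod.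
Qed.

Lemma path_vertices_Eprod n x X :
  is_path n x -> inGL2 X -> same_vertex (x 0%N) (infty A *m X) ->
  exists a, forall i, (i <= n)%N -> same_vertex (x i) (infty A *m (Eprod a i *m X)).
Proof.
move=> [_ adj_x] GLX x0X; elim: n adj_x => [|n IH] adj_x.
  by exists (fun=> 0) => i; rewrite leqn0 => /eqP-> /=; rewrite mul1mx.
have [|a xa] := IH; first by move=> i /ltnW; apply: adj_x.
have := xa n (leqnn n); rewrite inftyE => xn.
have [c xc] := same_vertex_Emx_step (inGL2_Eprod a n GLX) xn (adj_x n (leqnn _)).
set a' := fun j => if j == n.+1 then c else a j.
have a'E i : (i <= n)%N -> Eprod a' i = Eprod a i.
  move=> le_in; apply: eq_Eprod => j /andP[_ le_ji].
  by rewrite /a' ltn_eqF // ltnS (leq_trans le_ji).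
exists a' => i; rewrite leq_eqVlt => /orP[/eqP-> | lt_in]; last by rewrite a'E //; apply: xa.
by rewrite inftyE /= a'E // /a' eqxx -mulmxA.
Qed.

Lemma Eprod_vertices_uniq n x X a b : inGL2 X ->
  (forall i, (1 <= i <= n)%N -> same_vertex (x i) (infty A *m (Eprod a i *m X))) ->
  (forall i, (1 <= i <= n)%N -> same_vertex (x i) (infty A *m (Eprod b i *m X))) ->
  forall i, (1 <= i <= n)%N -> b i = a i.
Proof.
move=> GLX; elim: n => [|n IH] xa xb i; first by rewrite leqn0 andbC => /andP[/eqP->].
have le_nS j : (1 <= j <= n)%N -> (1 <= j <= n.+1)%N by case/andP=> -> /leqW.
have {}IH j : (1 <= j <= n)%N -> b j = a j.
  by apply: IH => k /le_nS; [apply: xa | apply: xb].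
case/andP=> i_gt0; rewrite leq_eqVlt => /orP[/eqP-> | lt_in]; last by apply: IH; rewrite i_gt0.
have Eab : Eprod b n = Eprod a n by apply: eq_Eprod.
have := xa n.+1 (leqnn _); have := xb n.+1 (leqnn _); rewrite !inftyE /= -!mulmxA Eab.
exact: same_vertex_Emx_uniq (inGL2_Eprod a n GLX).
Qed.

End Gamma.

Theorem lemma3p1 (A : comPzRingType) :
  (forall (n : nat) (x : nat -> 'rV[A]_2) (X : 'M[A]_2),
      is_path n x -> inGL2 X -> same_vertex (x 0%N) (infty A *m X) ->
      exists a : nat -> A,
        (forall i, (1 <= i <= n)%N ->
           same_vertex (x i) (infty A *m (Eprod a i *m X))) /\
        (forall b : nat -> A,
           (forall i, (1 <= i <= n)%N ->
              same_vertex (x i) (infty A *m (Eprod b i *m X))) ->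
           forall i, (1 <= i <= n)%N -> b i = a i)) /\
  (forall (n : nat) (X : 'M[A]_2) (a : nat -> A),
      inGL2 X ->
      is_path n (fun i => infty A *m (Eprod a i *m X))).
Proof.
split=> [n x X path_x GLX x0X | n X a]; last exact: is_path_Eprod.
have [a xa] := path_vertices_Eprod path_x GLX x0X.
have {}xa i : (1 <= i <= n)%N -> same_vertex (x i) (infty A *m (Eprod a i *m X)).
  by case/andP=> _; apply: xa.
by exists a; split=> // b; apply: Eprod_vertices_uniq GLX xa.
Qed.
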